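(* Let $i,j\in\mathrm{Idx}$ with $i\neq j$, $t$ a term, $\mathbf t'$ a hyper-term with $i,j\notin\mathrm{supp}(\mathbf t')$, and $Q$ a post hyper-assertion. Then $$\big(\mathrm{wp}\,([i:t,j:t]\uplus\mathbf t')\,\{Q\}\big)[j\mapsto i]\ \vdash\ \mathrm{wp}\,([i:t]\uplus\mathbf t')\,\{Q[j\mapsto i]\}.$$
   Context: Setting. $\mathrm{Val}=\mathbb{Z}$; $\mathrm{PVar}$ is a countably infinite set of program variables; a store is a function $s:\mathrm{PVar}\to\mathrm{Val}$; indices are $\mathrm{Idx}=\mathbb{N}$. Terms of a first-order imperative language are generated by $t ::= v \mid x \mid * \mid t\oplus t \mid \mathtt{skip}\mid x:=t \mid t;t \mid \mathtt{if}\ t\ \mathtt{then}\ t\ \mathtt{else}\ t \mid \mathtt{while}\ t\ \mathtt{do}\ t$, with a nondeterministic big-step semantics $t,s\Downarrow v,s'$. A hyper-term $\mathbf t$ is a finitely supported partial function from $\mathrm{Idx}$ to terms; a hyper-store is a total function $\mathbf s:\mathrm{Idx}\to\mathrm{Store}$; a hyper-return-value is a finitely supported partial function $\mathbf v:\mathrm{Idx}\rightharpoonup\mathrm{Val}$. $[i_1:t_1,\dots,i_n:t_n]$ is a finite map, $\uplus$ union of maps with disjoint supports. $\mathbf t,\mathbf s\Downarrow\mathbf v,\mathbf s'$ holds iff for every $i\in\mathrm{supp}(\mathbf t)$, $\mathbf t(i),\mathbf s(i)\Downarrow\mathbf v(i),\mathbf s'(i)$, and for every $i\notin\mathrm{supp}(\mathbf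 t)$, $\mathbf s'(i)=\mathbf s(i)$ and $\mathbf v(i)$ is undefined. A hyper-assertion is a predicate on hyper-stores; a post hyper-assertion is an upward-closed map $Q$ from hyper-return-values to hyper-assertions (if $Q(\mathbf v)(\mathbf s)$ and $\mathbf v'$ agrees with $\mathbf v$ on $\mathrm{supp}(\mathbf v)$ then $Q(\mathbf v')(\mathbf s)$). Entailment $P\vdash R$ means $\forall\mathbf s.\ P(\mathbf s)\Rightarrow R(\mathbf s)$. $\mathrm{wp}\,\mathbf t\,\{Q\}(\mathbf s):\iff\forall\mathbf v,\mathbf s'.\ (\mathbf t,\mathbf s\Downarrow\mathbf v,\mathbf s')\Rightarrow Q(\mathbf v)(\mathbf s')$. Reindexing. For $\pi:\mathrm{Idx}\to\mathrm{Idx}$ and a (possibly partial) function $\mathbf a$ on indices, $\mathbf a[\pi]:=\lambda k.\ \mathbf a(\pi(k))$ (undefined where $\mathbf a(\pi(k))$ is). For a hyper-assertion $P$, $P[\pi](\mathbf s):=P(\mathbf s[\pi])$; for a post hyper-assertion $Q$, $Q[\pi]:=\lambda\mathbf v.\ Q(\mathbf v[\pi])[\pi]$. $[j\mapsto i]$ denotes the reindexing $\pi$ with $\pi(j)=i$ and $\pi(k)=k$ for $k\neq j$. *)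

From Stdlib Require Import ZArith.
Open Scope Z_scope.

Definition Val := Z.
Definition PVar := nat.
Definition Idx := nat.
Definition Store := PVar -> Val.

(* Terms; a binary operator (+) is given by its interpretation Z -> Z -> Z. *)
Inductive term : Type :=
| TVal : Val -> term
| TVar : PVar -> term
| TStar : term
| TBin : (Val -> Val -> Val) -> term -> term -> term
| TSkip : term
| TAssign : PVar -> term -> term
| TSeq : term -> term -> term
| TIf : term -> term -> term -> term
| TWhile : term -> term -> term.

Definition upd (s : Store) (x : PVar) (v : Val) : Store :=
  fun y => if Nat.eqb y x then v else s y.

Inductive bigstep : term -> Store -> Val -> Store -> Prop :=
| BS_Val v s : bigstep (TVal v) s v s
| BS_Var x s : bigstep (TVar x) s (s x) s
| BS_Star v s : bigstep TStar s v s
| BS_Bin op t1 t2 s s1 s2 v1 v2 :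
    bigstep t1 s v1 s1 -> bigstep t2 s1 v2 s2 ->
    bigstep (TBin op t1 t2) s (op v1 v2) s2
| BS_Skip s : bigstep TSkip s 0 s
| BS_Assign x t s s1 v :
    bigstep t s v s1 -> bigstep (TAssign x t) s v (upd s1 x v)
| BS_Seq t1 t2 s s1 s2 v1 v2 :
    bigstep t1 s v1 s1 -> bigstep t2 s1 v2 s2 -> bigstep (TSeq t1 t2) s v2 s2
| BS_IfT c t1 t2 s s1 s2 vc v :
    bigstep c s vc s1 -> vc <> 0 -> bigstep t1 s1 v s2 ->
    bigstep (TIf c t1 t2) s v s2
| BS_IfF c t1 t2 s s1 s2 v :
    bigstep c s 0 s1 -> bigstep t2 s1 v s2 ->
    bigstep (TIf c t1 t2) s v s2
| BS_WhileF c b s s1 :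
    bigstep c s 0 s1 -> bigstep (TWhile c b) s 0 s1
| BS_WhileT c b s s1 s2 s3 vc vb v :
    bigstep c s vc s1 -> vc <> 0 -> bigstep b s1 vb s2 ->
    bigstep (TWhile c b) s2 v s3 -> bigstep (TWhile c b) s v s3.

(* Hyper objects.  Partial functions are option-valued; finite support is
   imposed by the predicate [finsupp] where required. *)
Definition hterm := Idx -> option term.
Definition hstore := Idx -> Store.
Definition hval := Idx -> option Val.

Definition finsupp {A : Type} (f : Idx -> option A) : Prop :=
  exists n : nat, forall k : nat, (n <= k)%nat -> f k = None.

Definition in_supp {A : Type} (f : Idx -> option A) (i : Idx) : Prop :=
  f i <> None.

Definition hsingle (i : Idx) (t : term) : hterm :=
  fun k => if Nat.eqb k i then Some t else None.

(* union of maps (used only for maps with disjoint supports) *)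
Definition hunion {A : Type} (f g : Idx -> option A) : Idx -> option A :=
  fun k => match f k with Some a => Some a | None => g k end.

Definition hpair (i : Idx) (t : term) (j : Idx) (t' : term) : hterm :=
  hunion (hsingle i t) (hsingle j t').

Definition hbigstep (T : hterm) (S : hstore) (V : hval) (S' : hstore) : Prop :=
  forall i : Idx,
    match T i with
    | Some t => exists v, V i = Some v /\ bigstep t (S i) v (S' i)
    | None => S' i = S i /\ V i = None
    end.

Definition hassn := hstore -> Prop.
Definition postassn := hval -> hassn.

Definition upward_closed (Q : postassn) : Prop :=
  forall (V V' : hval) (S : hstore),
    finsupp V -> finsupp V' ->
    (forall i v, V i = Some v -> V' i = Some v) ->
    Q V S -> Q V' S.

Definition entails (P R : hassn) : Prop := forall S, P S -> R S.

Definition wp (T : hterm) (Q : postassn) : hassn :=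
  fun S => forall V S', hbigstep T S V S' -> Q V S'.

Definition reidx {A : Type} (a : Idx -> A) (pi : Idx -> Idx) : Idx -> A :=
  fun k => a (pi k).
Definition reidx_assn (P : hassn) (pi : Idx -> Idx) : hassn :=
  fun S => P (reidx S pi).
Definition reidx_post (Q : postassn) (pi : Idx -> Idx) : postassn :=
  fun V => reidx_assn (Q (reidx V pi)) pi.

Definition remap (j i : Idx) : Idx -> Idx :=
  fun k => if Nat.eqb k j then i else k.

From Stdlib Require Import Arith.

(* Reindexing by [j ↦ i] turns a run of [i:t] ⊎ T' into a run of
   [i:t, j:t] ⊎ T' in which component j replays component i; the
   assumed weakest precondition then applies to that run directly. *)

Lemma hbigstep_reidx (T : hterm) (S : hstore) (V : hval) (S' : hstore)
    (pi : Idx -> Idx) :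
  hbigstep T S V S' ->
  hbigstep (reidx T pi) (reidx S pi) (reidx V pi) (reidx S' pi).
Proof. intros Hstep k; exact (Hstep (pi k)). Qed.

Lemma hbigstep_ext (T1 T2 : hterm) (S : hstore) (V : hval) (S' : hstore) :
  (forall k, T1 k = T2 k) -> hbigstep T1 S V S' -> hbigstep T2 S V S'.
Proof. intros HT Hstep k; rewrite <- HT; exact (Hstep k). Qed.

Lemma wp_reidx_entails (T T0 : hterm) (Q : postassn) (pi : Idx -> Idx) :
  (forall k, reidx T pi k = T0 k) ->
  entails (reidx_assn (wp T0 Q) pi) (wp T (reidx_post Q pi)).
Proof.
  intros HT S HS V S' Hstep.
  apply HS, (hbigstep_ext (reidx T pi)); [exact HT|].
  exact (hbigstep_reidx T S V S' pi Hstep).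
Qed.

Lemma reidx_remap_hunion_hsingle (i j : Idx) (t : term) (T' : hterm) (k : Idx) :
  i <> j ->
  reidx (hunion (hsingle i t) T') (remap j i) k = hunion (hpair i t j t) T' k.
Proof.
  intros Hij.
  unfold reidx, remap, hpair, hunion, hsingle.
  destruct (Nat.eqb_spec k j) as [->|_].
  - rewrite Nat.eqb_refl.
    destruct (Nat.eqb_spec j i) as [Hji|_]; [congruence|reflexivity].
  - destruct (Nat.eqb k i); reflexivity.
Qed.

(* None of the side conditions on [T'] and [Q] is needed. *)
Theorem mainTheorem14 (i j : Idx) (t : term) (T' : hterm) (Q : postassn) :
  i <> j ->
  finsupp T' ->
  T' i = None -> T' j = None ->
  upward_closed Q ->
  entails
    (reidx_assn (wp (hunion (hpair i t j t) T') Q) (remap j i))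
    (wp (hunion (hsingle i t) T') (reidx_post Q (remap j i))).
Proof.
  intros Hij _ _ _ _.
  apply wp_reidx_entails.
  intro k; exact (reidx_remap_hunion_hsingle i j t T' k Hij).
Qed.
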